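(* Let $N\ge2$ and $T\ge1$ be integers. For a sequence $s=(s(1),\dots,s(T))\in\{0,1\}^T$ define $$F(s)=\frac1T\sum_{t=1}^T\Big(1+\sum_{\ell=1}^{t}\prod_{j=\ell}^{t}\Big(1-\frac{s(j)}{N}\Big)\Big).$$ Call $s$ a consecutive blocking sequence (CBS) if its zeros are nonempty and occupy a set of consecutive positions. For a CBS $s$, let $L(s)$ be the number of ones before its block of zeros and $R(s)$ the number of ones after it. Then, for every $m$ with $1\le m\le T$, among all $s\in\{0,1\}^T$ with exactly $m$ zeros, $F$ is maximized by a CBS $s$ with $|L(s)-R(s)|\le1$.
   Context: $F(s)$ is the time-averaged expected age of one user (measured at the end of each slot, starting from age $1$) when a BS schedules that user with probability $1/N$ in every slot and $s(j)=0$ means the user is blocked in slot $j$. *)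

From mathcomp Require Import all_boot all_order all_algebra.
Set Implicit Arguments. Unset Strict Implicit. Unset Printing Implicit Defensive.
Import Order.TTheory GRing.Theory Num.Theory.
Local Open Scope ring_scope.

(* A blocking sequence s is a list of booleans of length T; the paper's
   s(j) (1-indexed) is nth false s (j-1); true = 1 (scheduled allowed),
   false = 0 (blocked). *)

Definition F (R : realFieldType) (N T : nat) (s : seq bool) : R :=
  (T%:R)^-1 * \sum_(t < T)
     (1 + \sum_(l < t.+1) \prod_(l <= j < t.+1) (1 - (nth false s j)%:R / N%:R)).

Definition nzeros (s : seq bool) : nat := count (fun b => ~~ b) s.

Definition CBS_LR (s : seq bool) (L R : nat) : Prop :=
  exists k : nat, (0 < k)%N /\ s = nseq L true ++ nseq k false ++ nseq R true.

Definition is_CBS (s : seq bool) : Prop := exists L R, CBS_LR s L R.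

From mathcomp Require Import all_boot all_order all_algebra.
From mathcomp Require Import zify lra.
Import Order.TTheory GRing.Theory Num.Theory.
Set Implicit Arguments. Unset Strict Implicit. Unset Printing Implicit Defensive.
Local Open Scope ring_scope.

(* Put c = 1 - 1/N and let V_b be the number of ones among the first b entries
   of s.  The product in F(s) is c^(V_t - V_(l-1)), so T F(s) - T is the
   off-diagonal half of the energy E(V) = sum_(b, b') c^|V_b - V_b'| of the
   multiset V = {V_0, ..., V_T}.  If s has n ones, V is {0, ..., n} plus one
   extra copy of V_j for every zero j.  Hence E(V) is a constant, plus twice the
   sum over the extra values w of the row sums sum_(u <= n) c^|u - w|, plus the
   energy of the extra values among themselves.  Row sums peak at w = n/2 (each
   is a sum of two geometric sums whose lengths add up to n + 2), and the last
   term is largest when all extra values coincide; the CBS with n/2 ones before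
   its zeros attains both bounds. *)

Implicit Types (s : seq bool) (k l : nat).

Definition ones_before s k : nat := (\sum_(0 <= j < k) nth false s j)%N.

Lemma ones_before0 s : ones_before s 0 = 0%N.
Proof. by rewrite /ones_before big_geq. Qed.

Lemma ones_before_cons b s k : ones_before (b :: s) k.+1 = (b + ones_before s k)%N.
Proof. by rewrite /ones_before big_nat_recl. Qed.

Lemma ones_before_split s [l k] : (l <= k)%N ->
  ones_before s k = (ones_before s l + \sum_(l <= j < k) nth false s j)%N.
Proof. by move=> le_lk; rewrite /ones_before (big_cat_nat (leq0n l) le_lk). Qed.

Lemma ones_before_mono s [l k] : (l <= k)%N -> (ones_before s l <= ones_before s k)%N.
Proof. by move=> le_lk; rewrite (ones_before_split s le_lk) leq_addr. Qed.

Definition prefix_counts s : seq nat := map (ones_before s) (iota 0 (size s).+1).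

Lemma prefix_counts_cons b s :
  prefix_counts (b :: s) = 0%N :: map (addn b) (prefix_counts s).
Proof.
rewrite /prefix_counts [size _]/= -[iota 0 _]/(0%N :: iota 1 (size s).+1).
rewrite map_cons ones_before0 (iotaDl 1 0) -!map_comp; congr (_ :: _).
by apply: eq_map => k /=; rewrite add1n ones_before_cons.
Qed.

Fixpoint ones_before_zeros s : seq nat :=
  if s is b :: s' then
    if b then map S (ones_before_zeros s') else 0%N :: ones_before_zeros s'
  else [::].

Lemma size_ones_before_zeros s : size (ones_before_zeros s) = nzeros s.
Proof. by elim: s => [|[] s IH] //=; rewrite ?size_map IH. Qed.

Lemma ones_before_zeros_le s w : w \in ones_before_zeros s -> (w <= count id s)%N.
Proof.
elim: s w => [|[] s IH] w //=.
- by case/mapP => w' /IH le_w' ->.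
- by rewrite in_cons => /predU1P[-> // | /IH].
Qed.

Lemma ones_before_zeros_CBS L k Rr :
  ones_before_zeros (nseq L true ++ nseq k false ++ nseq Rr true) = nseq k L.
Proof.
have onesR : ones_before_zeros (nseq Rr true) = [::] by elim: Rr => //= Rr ->.
have zerosk t : ones_before_zeros (nseq k false ++ t) = nseq k 0%N ++ ones_before_zeros t.
  by elim: k => //= k ->.
have onesL t : ones_before_zeros (nseq L true ++ t) = map (addn L) (ones_before_zeros t).
  elim: L => /= [|L ->]; first by rewrite map_id_in.
  by rewrite -map_comp; apply: eq_map => x /=; rewrite addSn.
by rewrite onesL zerosk onesR cats0 map_nseq addn0.
Qed.

Lemma perm_prefix_counts s :
  perm_eq (prefix_counts s) (iota 0 (count id s).+1 ++ ones_before_zeros s).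
Proof.
elim: s => [|b s IH]; first by rewrite /prefix_counts /= ones_before0.
have iotaS n : iota 0 n.+1 = 0%N :: map S (iota 0 n).
  by rewrite -(eq_map add1n) -iotaDl.
rewrite prefix_counts_cons [count _ _]/= [ones_before_zeros _]/=; case: b.
- rewrite add1n iotaS cat_cons perm_cons -map_cat -(eq_map add1n).
  exact: perm_map.
- rewrite add0n map_id_in // perm_sym -(cat1s 0%N) perm_catCA perm_cons perm_sym.
  exact: IH.
Qed.

Lemma sum_ord_sym [V : nmodType] (f : nat -> nat -> V) n :
  (forall i j, f i j = f j i) ->
  \sum_(i < n.+1) \sum_(j < n.+1) f i j =
  \sum_(i < n.+1) f i i + (\sum_(t < n) \sum_(l < t.+1) f t.+1 l) *+ 2.
Proof.
move=> fC; elim: n => [|n IH]; first by rewrite !big_ord1 big_ord0 mul0rn addr0.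
rewrite big_ord_recr /=.
under eq_bigr => i _ do rewrite big_ord_recr /=.
rewrite big_split /= IH [\sum_(j < n.+2) f n.+1 j]big_ord_recr /=.
rewrite [\sum_(i < n.+2) f i i]big_ord_recr [\sum_(t < n.+1) \sum_(l < t.+1) _]big_ord_recr /=.
have -> : \sum_(i < n.+1) f i n.+1 = \sum_(i < n.+1) f n.+1 i.
  by apply: eq_bigr => i _; exact: fC.
rewrite mulrnDl !mulr2n -!addrA; congr (_ + _).
by rewrite [RHS]addrC -!addrA.
Qed.

Section PairSum.

Variables (R : pzRingType) (c : R).

Definition pair_sum (r : seq nat) : R := \sum_(u <- r) \sum_(v <- r) c ^+ `|u - v|.

Definition level_sum n w : R := \sum_(u <- iota 0 n.+1) c ^+ `|u - w|.

Lemma pair_sum_perm [r r'] : perm_eq r r' -> pair_sum r = pair_sum r'.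
Proof.
by move=> rr'; rewrite /pair_sum (perm_big _ rr'); apply: eq_bigr => u _; rewrite (perm_big _ rr').
Qed.

Lemma pair_sum_cat r r' : pair_sum (r ++ r') =
  pair_sum r + (\sum_(v <- r') \sum_(u <- r) c ^+ `|u - v|) *+ 2 + pair_sum r'.
Proof.
rewrite /pair_sum big_cat /=.
under eq_bigr => u _ do rewrite big_cat.
under [X in _ + X]eq_bigr => u _ do rewrite big_cat.
rewrite !big_split /= mulr2n.
have -> : \sum_(u <- r) \sum_(v <- r') c ^+ `|u - v| =
          \sum_(v <- r') \sum_(u <- r) c ^+ `|u - v| by rewrite exchange_big.
have -> : \sum_(v <- r') \sum_(u <- r) c ^+ `|v - u| =
          \sum_(v <- r') \sum_(u <- r) c ^+ `|u - v|.
  by apply: eq_bigr => v _; apply: eq_bigr => u _; rewrite distnC.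
by rewrite !addrA.
Qed.

Lemma pair_sum_prefix_counts_split s :
  pair_sum (prefix_counts s) =
  pair_sum (iota 0 (count id s).+1)
  + (\sum_(w <- ones_before_zeros s) level_sum (count id s) w) *+ 2
  + pair_sum (ones_before_zeros s).
Proof. by rewrite (pair_sum_perm (perm_prefix_counts s)) pair_sum_cat. Qed.

Definition lower_sum s T : R :=
  \sum_(t < T) \sum_(l < t.+1) c ^+ `|ones_before s t.+1 - ones_before s l|.

Lemma pair_sum_prefix_counts s :
  pair_sum (prefix_counts s) = (size s).+1%:R + lower_sum s (size s) *+ 2.
Proof.
rewrite /pair_sum /prefix_counts big_map.
rewrite -[iota 0 _]/(index_iota 0 (size s).+1) (big_mkord xpredT).
under eq_bigr => b _ do rewrite big_map (big_mkord xpredT).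
rewrite (sum_ord_sym (f := fun b b' => c ^+ `|ones_before s b - ones_before s b'|)) => [|b b'].
  by under eq_bigr => b _ do rewrite distnn expr0; rewrite sumr_const card_ord.
by rewrite distnC.
Qed.

Definition powsum a : R := \sum_(i < a) c ^+ i.

Lemma level_sum_powsum n w : (w <= n)%N ->
  level_sum n w + 1 = powsum w.+1 + powsum (n - w).+1.
Proof.
move=> le_wn.
have lower : \sum_(0 <= u < w.+1) c ^+ `|u - w| = powsum w.+1.
  rewrite big_nat_rev /powsum big_mkord; apply: eq_bigr => i _.
  by congr (_ ^+ _); have := ltn_ord i; lia.
have upper : \sum_(w.+1 <= u < n.+1) c ^+ `|u - w| + 1 = powsum (n - w).+1.
  rewrite /powsum big_ord_recl expr0 addrC; congr (_ + _).
  rewrite -{1}[w.+1]add0n big_addn big_mkord subSS; apply: eq_bigr => i _.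
  by rewrite lift0; congr (_ ^+ _); lia.
rewrite /level_sum -[iota 0 _]/(index_iota 0 n.+1) (big_cat_nat (leq0n w.+1)) //=.
by rewrite lower -addrA upper.
Qed.

End PairSum.

Section Unimodal.

Variables (R : realFieldType) (c : R).
Hypotheses (c_ge0 : 0 <= c) (c_le1 : c <= 1).

Lemma powsum_rebalance a b : (a <= b)%N ->
  powsum c a + powsum c b.+1 <= powsum c a.+1 + powsum c b.
Proof.
move=> le_ab; have := ler_wiXn2l c_ge0 c_le1 le_ab.
rewrite /powsum !big_ord_recr /=; lra.
Qed.

Lemma powsum_le_balanced a b :
  powsum c a + powsum c b <= powsum c (a + b)./2 + powsum c (a + b - (a + b)./2).
Proof.
wlog le_ab : a b / (a <= b)%N.
  move=> bal; case: (leqP a b) => [/bal // | /ltnW/bal].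
  by rewrite addnC [X in X <= _]addrC.
elim/ltn_ind: b a le_ab => b IH a le_ab.
case: (leqP b a.+1) => [le_b_a1 | lt_a1_b].
  have -> : ((a + b)./2 = a)%N by lia.
  by have -> : (a + b - a = b)%N by lia.
case: b IH le_ab lt_a1_b => // b IH le_ab lt_a1_b.
apply: le_trans (powsum_rebalance _) _; first by lia.
by rewrite -addSnnS; apply: IH; lia.
Qed.

Lemma level_sum_le_mid n w : (w <= n)%N -> level_sum c n w <= level_sum c n n./2.
Proof.
move=> le_wn; rewrite -(lerD2r 1) !level_sum_powsum //; last by lia.
have := powsum_le_balanced w.+1 (n - w).+1.
have -> : ((w.+1 + (n - w).+1)./2 = (n./2).+1)%N by lia.
by have -> : (w.+1 + (n - w).+1 - (n./2).+1 = (n - n./2).+1)%N by lia.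
Qed.

Lemma pair_sum_le_nseq r a : pair_sum c r <= pair_sum c (nseq (size r) a).
Proof.
apply: (@le_trans _ _ (\sum_(u <- r) \sum_(v <- r) 1)).
  by apply: ler_sum => u _; apply: ler_sum => v _; exact: exprn_ile1.
rewrite /pair_sum !big_nseq !iter_addr_0 distnn expr0.
by rewrite !big_const_seq !count_predT !iter_addr_0.
Qed.

End Unimodal.

Lemma ler_sum_nseq (R : numDomainType) (f : nat -> R) (r : seq nat) a :
  {in r, forall x, f x <= f a} -> \sum_(x <- r) f x <= \sum_(x <- nseq (size r) a) f x.
Proof.
elim: r => [|x r IH] le_fa; first by rewrite !big_nil.
rewrite !big_cons lerD ?le_fa ?mem_head // IH // => y ry.
by rewrite le_fa // in_cons ry orbT.
Qed.

Definition balanced_CBS n k := nseq n./2 true ++ nseq k false ++ nseq (n - n./2) true.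

Lemma count_balanced_CBS n k : count id (balanced_CBS n k) = n.
Proof. by rewrite !count_cat !count_nseq /=; lia. Qed.

Lemma nzeros_balanced_CBS n k : nzeros (balanced_CBS n k) = k.
Proof. by rewrite /nzeros !count_cat !count_nseq /=; lia. Qed.

Lemma size_balanced_CBS n k : size (balanced_CBS n k) = (n + k)%N.
Proof. by rewrite !size_cat !size_nseq; lia. Qed.

Lemma pair_sum_prefix_counts_le_balanced (R : realFieldType) (c : R) s :
  0 <= c <= 1 ->
  pair_sum c (prefix_counts s) <=
  pair_sum c (prefix_counts (balanced_CBS (count id s) (nzeros s))).
Proof.
case/andP=> c_ge0 c_le1.
rewrite !pair_sum_prefix_counts_split count_balanced_CBS ones_before_zeros_CBS.
rewrite -size_ones_before_zeros; apply: lerD; first apply: lerD => //.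
  rewrite lerMn2r ler_sum_nseq ?orbT // => w /ones_before_zeros_le.
  exact: level_sum_le_mid.
exact: pair_sum_le_nseq.
Qed.

Lemma prod_scheduling_factors (R : unitRingType) (N : nat) s [l k] : (l <= k)%N ->
  \prod_(l <= j < k) (1 - (nth false s j)%:R / N%:R) =
  (1 - (N%:R : R)^-1) ^+ (ones_before s k - ones_before s l).
Proof.
move=> le_lk; rewrite (ones_before_split s le_lk) addKn -prodrXr.
by apply: eq_bigr => j _; case: (nth false s j); rewrite ?mul1r ?mul0r ?subr0.
Qed.

Lemma F_lower_sum (R : realFieldType) (N T : nat) s :
  F R N T s = T%:R^-1 * (T%:R + lower_sum (1 - (N%:R : R)^-1) s T).
Proof.
rewrite /F big_split /= sumr_const card_ord; congr (_ * (_ + _)).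
apply: eq_bigr => t _; apply: eq_bigr => l _.
have le_lt := ltnW (ltn_ord l).
by rewrite prod_scheduling_factors // distnEl // ones_before_mono.
Qed.

Lemma F_le_pair_sum (R : realFieldType) (N T : nat) s s' :
  size s = T -> size s' = T ->
  pair_sum (1 - (N%:R : R)^-1) (prefix_counts s) <=
  pair_sum (1 - (N%:R : R)^-1) (prefix_counts s') ->
  F R N T s <= F R N T s'.
Proof.
move=> <- size_s'; rewrite !pair_sum_prefix_counts size_s' lerD2l lerMn2r /= => le_ss'.
by rewrite !F_lower_sum ler_wpM2l ?invr_ge0 ?ler0n // lerD2l.
Qed.

Theorem lemma5 (R : realFieldType) (N T m : nat) :
  (2 <= N)%N -> (1 <= T)%N -> (1 <= m)%N -> (m <= T)%N ->
  exists s : seq bool,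
    [/\ size s = T, nzeros s = m,
        (exists L Rr : nat, CBS_LR s L Rr /\ (L <= Rr.+1)%N /\ (Rr <= L.+1)%N)
      & forall s' : seq bool, size s' = T -> nzeros s' = m ->
          F R N T s' <= F R N T s].
Proof.
move=> N_ge2 _ m_ge1 le_mT.
have c01 : 0 <= 1 - (N%:R : R)^-1 <= 1.
  rewrite subr_ge0 invf_le1 ?ler1n ?ltr0n ?(leq_trans _ N_ge2) //=.
  by rewrite lerBlDr lerDl invr_ge0.
exists (balanced_CBS (T - m) m); split.
- by rewrite size_balanced_CBS subnK.
- exact: nzeros_balanced_CBS.
- exists (T - m)%N./2, (T - m - (T - m)./2)%N; split; first by exists m.
  lia.
move=> s' size_s' nzeros_s'.
apply: F_le_pair_sum => //; first by rewrite size_balanced_CBS subnK.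
have count_s' : count id s' = (T - m)%N.
  by rewrite -size_s' -nzeros_s' -(count_predC id s') addnK.
by rewrite -count_s' -nzeros_s'; exact: pair_sum_prefix_counts_le_balanced.
Qed.
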